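(* Let $X$ be an $X$-set parameter, let $t\ge 0$ be an integer, let $G$ be a graph, and let $H$ be an induced subgraph of $\mathscr{X}^{\rm TAR}(G)$. If $H\cong Q_t$ (the $t$-dimensional hypercube), then $V(H)$ is an interval $[S,T]=\{R: S\subseteq R\subseteq T\}$ of length $t$ (i.e., $|T\setminus S|=t$) in the poset $(\mathcal{P}(V(G)),\subseteq)$.
   Context: All graphs are simple, finite, with nonempty vertex set. An $X$-set parameter is a graph parameter $X(G)$ defined as the minimum cardinality of an $X$-set of $G$, where the $X$-sets of each graph are subsets of its vertex set determined by some property satisfying: (1) supersets (within $V(G)$) of $X$-sets are $X$-sets; (2) the empty set is never an $X$-set; (3) an $X$-set of a disconnected graph is the union of an $X$-set of each component; (4) if $G$ has no isolated vertices, every set of $|V(G)|-1$ vertices is an $X$-set. The $X$-TAR graph $\mathscr{X}^{\rm TAR}(G)$ has as vertices all $X$-sets of $G$, with $S_1,S_2$ adjacent iff $|S_1\ominus S_2|=1$. $\mathcal{P}(V(G))$ is the power set of $V(G)$; the length of an interval is the maximum length (number of elements minus one) of a chain in it. *)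

From mathcomp Require Import all_boot.
Set Implicit Arguments. Unset Strict Implicit. Unset Printing Implicit Defensive.

Definition simple_graph (T : finType) (e : rel T) : Prop :=
  symmetric e /\ irreflexive e /\ 0 < #|T|.

Definition symdiff (T : finType) (A B : {set T}) : {set T} :=
  (A :\: B) :|: (B :\: A).

Definition is_component (T : finType) (e : rel T) (C : {set T}) : Prop :=
  exists x, C = [set y | connect e x y].

Definition induced (T : finType) (e : rel T) (C : {set T}) :
  rel {x : T | x \in C} := fun x y => e (val x) (val y).

(* An X-set parameter, given by its X-set predicate:
   Xp T e S  <=>  S is an X-set of the graph (T, e). *)
Record Xset_parameter (Xp : forall T : finType, rel T -> {set T} -> bool) : Prop := {
  xp_up : forall (T : finType) (e : rel T), simple_graph e ->
    forall S1 S2 : {set T}, S1 \subset S2 -> Xp T e S1 -> Xp T e S2;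
  xp_empty : forall (T : finType) (e : rel T), simple_graph e -> ~~ Xp T e set0;
  (* (3) X-sets of a disconnected graph are exactly unions of X-sets of the
     components, i.e. sets whose trace on each component C is an X-set of G[C] *)
  xp_comp : forall (T : finType) (e : rel T), simple_graph e ->
    (exists x y : T, ~~ connect e x y) ->
    forall S : {set T},
      Xp T e S <->
      (forall C : {set T}, is_component e C ->
         Xp {x : T | x \in C} (@induced T e C) [set x | val x \in S]);
  xp_full : forall (T : finType) (e : rel T), simple_graph e ->
    (forall x : T, exists y : T, e x y) ->
    forall S : {set T}, #|S| = #|T| - 1 -> Xp T e S
}.

(* Adjacency in the X-TAR graph / in the hypercube Q_t (on subsets of 'I_t). *)
Definition tar_adj (T : finType) (A B : {set T}) : bool := #|symdiff A B| == 1.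

(* W (a set of X-sets of G, i.e. the vertex set of an induced subgraph H of the
   X-TAR graph) induces a subgraph isomorphic to Q_t, whose vertices are the
   subsets of 'I_t, adjacent iff their symmetric difference has size 1. *)
Definition induces_hypercube (T : finType) (W : {set {set T}}) (t : nat) : Prop :=
  exists f : {set 'I_t} -> {set T},
    injective f /\ (forall R, R \in W <-> exists A, R = f A) /\
    (forall A B, tar_adj A B = tar_adj (f A) (f B)).

From mathcomp Require Import all_boot.

(* Its image { f ∅ Δ Y | Y ⊆ X },
   X the range of x, is the interval [f ∅ \ X, f ∅ ∪ X]. *)

Set Implicit Arguments.
Unset Strict Implicit.
Unset Printing Implicit Defensive.

Section Symdiff.

Variable T : finType.
Implicit Types (A B C P R X : {set T}) (a b c d : T).

Lemma in_symdiff A B v : (v \in symdiff A B) = (v \in A) (+) (v \in B).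
Proof. by rewrite /symdiff !inE; case: (v \in A); case: (v \in B). Qed.

Lemma symdiffA A B C : symdiff A (symdiff B C) = symdiff (symdiff A B) C.
Proof. by apply/setP => v; rewrite !in_symdiff addbA. Qed.

Lemma symdiffs0 A : symdiff A set0 = A.
Proof. by apply/setP => v; rewrite in_symdiff inE addbF. Qed.

Lemma symdiffK A B : symdiff (symdiff A B) B = A.
Proof. by apply/setP => v; rewrite !in_symdiff addbK. Qed.

Lemma symdiffKl A B : symdiff A (symdiff A B) = B.
Proof. by apply/setP => v; rewrite !in_symdiff addKb. Qed.

Lemma symdiff_set1_in A a : a \in A -> A :\ a = symdiff A [set a].
Proof.
move=> Aa; apply/setP => v; rewrite in_symdiff !inE.
by case: (eqVneq v a) => [->|]; rewrite ?Aa ?addbF.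
Qed.

Lemma symdiff_set1_eq a b c d : a != b ->
  symdiff [set a] [set c] = symdiff [set b] [set d] ->
  (c = a /\ d = b) \/ (c = b /\ d = a).
Proof.
move=> ab E.
have mem v : (v == a) (+) (v == c) = (v == b) (+) (v == d).
  by rewrite -!in_set1 -!in_symdiff E.
case: (eqVneq c a) mem => [-> | ca] mem; [left | right].
  by have := mem b; rewrite addbb eqxx addTb => /esym/negbFE/eqP.
have da : d = a.
  by have := mem a; rewrite eqxx eq_sym (negbTE ca) (negbTE ab) /= => /esym/eqP/esym.
by have := mem c; rewrite da (negbTE ca) eqxx addbF => /esym/eqP.
Qed.

Lemma tar_adjP A B : reflect (exists a, B = symdiff A [set a]) (tar_adj A B).
Proof.
apply: (iffP cards1P) => [[a Ea] | [a ->]]; exists a; first by rewrite -Ea symdiffKl.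
by rewrite symdiffKl.
Qed.

Lemma tar_adj_setD1 B a : a \in B -> tar_adj (B :\ a) B.
Proof. by move=> Ba; apply/tar_adjP; exists a; rewrite symdiff_set1_in ?symdiffK. Qed.

Lemma symdiff_subset_interval P R X :
  (symdiff P R \subset X) = (P :\: X \subset R) && (R \subset P :|: X).
Proof.
apply/subsetP/andP => [sPRX | [/subsetP sR /subsetP sT] v].
  split; apply/subsetP => v; have := sPRX v; rewrite in_symdiff !inE;
    by case: (v \in P); case: (v \in R); case: (v \in X) => //= ->.
have := sR v; have := sT v; rewrite in_symdiff !inE.
by case: (v \in P); case: (v \in R); case: (v \in X) => //= ->.
Qed.

Lemma setDUD P X : (P :|: X) :\: (P :\: X) = X.
Proof. by apply/setP => v; rewrite !inE; case: (v \in P); case: (v \in X). Qed.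

End Symdiff.

Lemma imset_symdiff (aT rT : finType) (x : aT -> rT) (A B : {set aT}) :
  injective x -> x @: symdiff A B = symdiff (x @: A) (x @: B).
Proof.
move=> x_inj; apply/setP => v; rewrite in_symdiff.
have [/codomP [k ->] | xv] := boolP (v \in codom x); first by rewrite !mem_imset // in_symdiff.
have notin (D : {set aT}) : v \in x @: D = false.
  by apply/imsetP => [[k _ vk]]; case/codomP: xv; exists k.
by rewrite !notin.
Qed.

Lemma imset_preimset (aT rT : finType) (x : aT -> rT) (Y : {set rT}) :
  Y \subset x @: [set: aT] -> x @: (x @^-1: Y) = Y.
Proof.
move=> /subsetP sY; apply/setP => v; apply/imsetP/idP => [[k] | Yv].
  by rewrite inE => Yk ->.
by have /imsetP [k _ vk] := sY v Yv; exists k; rewrite // inE -vk.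
Qed.

Section HypercubeEmbedding.

Variables (I T : finType) (f : {set I} -> {set T}).
Hypothesis f_inj : injective f.
Hypothesis f_adj : forall A B, tar_adj A B -> tar_adj (f A) (f B).

Lemma hypercube_embedding_symdiff (x : I -> T) : injective x ->
    (forall i, f [set i] = symdiff (f set0) [set x i]) ->
  forall B, f B = symdiff (f set0) (x @: B).
Proof.
move=> x_inj f_set1 B; elim: {B}_.+1 {-2}B (ltnSn #|B|) => // n IH B.
rewrite ltnS => leBn.
have [-> | [i Bi]] := set_0Vmem B; first by rewrite imset0 symdiffs0.
have [Bi0 | [j]] := set_0Vmem (B :\ i).
  by rewrite -(setD1K Bi) Bi0 setU0 imset_set1 f_set1.
rewrite !inE => /andP [ji Bj].
set P := symdiff (f set0) (x @: B).
have xD1 (C : {set I}) k : k \in C -> x @: (C :\ k) = symdiff (x @: C) [set x k].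
  by move=> Ck; rewrite symdiff_set1_in // imset_symdiff // imset_set1.
have ltBn k : k \in B -> #|B :\ k| < n.
  by move=> Bk; apply: leq_trans leBn; rewrite (cardsD1 k B) Bk.
have Bij : j \in B :\ i by rewrite !inE ji.
have fBi : f (B :\ i) = symdiff P [set x i] by rewrite IH ?ltBn // xD1 // symdiffA.
have fBj : f (B :\ j) = symdiff P [set x j] by rewrite IH ?ltBn // xD1 // symdiffA.
have fBij : f (B :\ i :\ j) = symdiff (symdiff P [set x i]) [set x j].
  rewrite IH ?xD1 ?symdiffA //.
  exact: leq_ltn_trans (subset_leq_card (subD1set _ _)) (ltBn i Bi).
have /tar_adjP [c fBc] := f_adj (tar_adj_setD1 Bi).
have /tar_adjP [d fBd] := f_adj (tar_adj_setD1 Bj).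
have xij : x i != x j by rewrite (inj_eq x_inj) eq_sym.
(* [f B] is a common neighbour of [f (B :\ i)] and [f (B :\ j)], which lie at
   distance 2; their only common neighbours are [P] and [f (B :\ i :\ j)]. *)
have : symdiff [set x i] [set c] = symdiff [set x j] [set d].
  by apply: (can_inj (symdiffKl P)); rewrite !symdiffA -fBi -fBj -fBc -fBd.
case/(symdiff_set1_eq xij) => [[ci _] | [cj _]].
  by rewrite fBc fBi ci symdiffK.
have /f_inj BBij : f B = f (B :\ i :\ j) by rewrite fBc fBi fBij cj.
by move: Bi; rewrite BBij !inE eqxx andbF.
Qed.

Lemma hypercube_embedding_coords :
  exists2 x : I -> T, injective x & forall B, f B = symdiff (f set0) (x @: B).
Proof.
have adj0 i : tar_adj (f set0) (f [set i]).
  by apply: f_adj; apply/tar_adjP; exists i; rewrite /symdiff set0D set0U setD0.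
have [x fx] := fin_all_exists (fun i => elimT (tar_adjP _ _) (adj0 i)).
have x_inj : injective x by move=> i j xij; apply/set1_inj/f_inj; rewrite !fx xij.
by exists x => //; apply: hypercube_embedding_symdiff.
Qed.

End HypercubeEmbedding.

Theorem lemma2p1
  (Xp : forall T : finType, rel T -> {set T} -> bool) (HX : Xset_parameter Xp)
  (t : nat) (V : finType) (e : rel V) (HG : simple_graph e)
  (W : {set {set V}}) (HW : forall S, S \in W -> Xp V e S)
  (Hiso : induces_hypercube W t) :
  exists S T : {set V}, S \subset T /\
    W = [set R : {set V} | (S \subset R) && (R \subset T)] /\ #|T :\: S| = t.
Proof.
have [f [f_inj [Wf f_adj]]] := Hiso.
have f_hom A B : tar_adj A B -> tar_adj (f A) (f B) by rewrite f_adj.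
have [x x_inj fE] := hypercube_embedding_coords f_inj f_hom.
set P := f set0; set X := x @: [set: 'I_t].
exists (P :\: X), (P :|: X); split; first exact: subset_trans (subsetDl _ _) (subsetUl _ _).
split; last by rewrite setDUD card_imset // cardsT card_ord.
apply/setP => R; rewrite inE -symdiff_subset_interval.
apply/idP/idP => [/Wf [A ->] | sPRX].
  by rewrite fE symdiffKl imsetS ?subsetT.
by apply/Wf; exists (x @^-1: symdiff P R); rewrite fE imset_preimset // symdiffKl.
Qed.
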